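(* Let $n$ be a positive integer and let $\lambda$ and $\mu$ be integer partitions of $n$. If $\lambda_1 = \mu_1$ and $\mathrm{pre}_2(\lambda) = \mathrm{pre}_2(\mu)$, then $\lambda = \mu$.
   Context: An integer partition $\lambda = (\lambda_1, \dots, \lambda_\ell)$ of a positive integer $n$ is a weakly decreasing finite sequence of positive integers whose sum is $n$; the $\lambda_i$ are its parts and $\ell(\lambda)=\ell$ is its length. For a partition $\lambda = (\lambda_1,\dots,\lambda_\ell)$, $\mathrm{pre}_2(\lambda)$ denotes the partition whose multiset of parts is the multiset $\{\!\{\lambda_i\lambda_j : 1 \le i < j \le \ell\}\!\}$ (with multiplicities, arranged in weakly decreasing order); if $\ell < 2$ it is the empty partition. *)

From mathcomp Require Import all_boot.
Set Implicit Arguments. Unset Strict Implicit. Unset Printing Implicit Defensive.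

Definition is_partition (n : nat) (l : seq nat) : bool :=
  [&& sorted geq l, all (fun x => 0 < x) l & sumn l == n].

Definition pre2 (l : seq nat) : seq nat :=
  sort geq (flatten [seq [seq nth 0 l i * nth 0 l j | j <- iota i.+1 (size l - i.+1)]
                        | i <- iota 0 (size l)]).

Definition part1 (l : seq nat) : nat := head 0 l.

Example pre2_ex : pre2 [:: 3; 2; 1] = [:: 6; 3; 2]. Proof. by []. Qed.

From mathcomp Require Import all_boot.
Set Implicit Arguments. Unset Strict Implicit.

(* Split a partition as m ++ s, with m the parts already known to agree (initially
   just the common largest part x) and s the rest. The products lambda_i lambda_j
   with at least one index in s form the multiset [ext_prods m s]; its maximum is
   x * y for the largest part y of s, so it determines y. Removing the products of y
   with the parts of m leaves [ext_prods (m ++ [y]) (behead s)], and we iterate. *)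

Fixpoint pairprods (l : seq nat) : seq nat :=
  if l is x :: s then map (muln x) s ++ pairprods s else [::].

Definition cross_prods (m s : seq nat) : seq nat :=
  flatten [seq map (muln c) s | c <- m].

Definition ext_prods (m s : seq nat) : seq nat := cross_prods m s ++ pairprods s.

Lemma geq_trans : transitive geq.
Proof. exact: rev_trans leq_trans. Qed.

Lemma pairprods_nth (l : seq nat) :
  pairprods l = flatten [seq map (muln (nth 0 l i)) (drop i.+1 l) | i <- iota 0 (size l)].
Proof.
elim: l => [|x s IH] //=; rewrite drop0 IH -add1n iotaDl -map_comp.
by congr (_ ++ flatten _); apply: eq_map.
Qed.

Lemma pre2E (l : seq nat) : pre2 l = sort geq (pairprods l).
Proof.
rewrite /pre2 pairprods_nth; congr (sort _ (flatten _)); apply: eq_map => i.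
rewrite (map_comp (muln _) (nth 0 l)) map_nth_iota // take_oversize //.
by rewrite size_drop.
Qed.

Lemma pairprods_cons (x : nat) (s : seq nat) : pairprods (x :: s) = ext_prods [:: x] s.
Proof. by rewrite /ext_prods /cross_prods /= cats0. Qed.

Lemma ext_prods_nil (m : seq nat) : ext_prods m [::] = [::].
Proof. by rewrite /ext_prods /cross_prods cats0; elim: m. Qed.

Lemma perm_cross_prods_cons (m s : seq nat) (y : nat) :
  perm_eq (cross_prods m (y :: s)) ([seq c * y | c <- m] ++ cross_prods m s).
Proof.
elim: m => [|c m IH] //=.
by rewrite perm_cons perm_sym perm_catCA perm_cat2l perm_sym.
Qed.

Lemma perm_ext_prods_cons (m s : seq nat) (y : nat) :
  perm_eq (ext_prods m (y :: s)) ([seq c * y | c <- m] ++ ext_prods (rcons m y) s).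
Proof.
rewrite /ext_prods /cross_prods -cats1 map_cat flatten_cat /= cats0 !catA.
by rewrite !perm_cat2r; apply: perm_cross_prods_cons.
Qed.

Lemma mem_ext_prods_cons (m s : seq nat) (c y : nat) :
  c \in m -> c * y \in ext_prods m (y :: s).
Proof.
move=> mc; rewrite (perm_mem (perm_ext_prods_cons m s y)) mem_cat.
by rewrite (map_f (fun c => c * y)).
Qed.

Lemma pairprods_le (b : nat) (l : seq nat) (w : nat) :
  all (fun d => d <= b) l -> w \in pairprods l -> w <= b * b.
Proof.
elim: l => [|y s IH] //= /andP[yb sb]; rewrite mem_cat => /orP[|]; last exact: IH.
by case/mapP=> d ds ->; rewrite leq_mul //; move/allP: sb; apply.
Qed.

Lemma cross_prods_le (a b : nat) (m s : seq nat) (w : nat) :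
  all (fun c => c <= a) m -> all (fun d => d <= b) s ->
  w \in cross_prods m s -> w <= a * b.
Proof.
move=> /allP ma /allP sb /flattenP[_ /mapP[c mc ->] /mapP[d sd ->]].
by rewrite leq_mul ?ma ?sb.
Qed.

Lemma ext_prods_le (a b : nat) (m s : seq nat) (w : nat) :
  all (fun c => c <= a) m -> all (fun d => d <= b) s -> b <= a ->
  w \in ext_prods m s -> w <= a * b.
Proof.
move=> ma sb ba; rewrite mem_cat => /orP[|]; first exact: cross_prods_le.
by move/(pairprods_le sb)/leq_trans; apply; rewrite leq_mul2r ba orbT.
Qed.

Lemma ext_prods_max (x y : nat) (m s : seq nat) :
  x \in m -> all (fun c => c <= x) m -> sorted geq (y :: s) -> y <= x ->
  x * y \in ext_prods m (y :: s) /\ forall w, w \in ext_prods m (y :: s) -> w <= x * y.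
Proof.
move=> mx mle ys yx; split; first exact: mem_ext_prods_cons.
move=> w; apply: ext_prods_le => //=.
by rewrite leqnn; apply: order_path_min geq_trans ys.
Qed.

Lemma ext_prods_inj (x : nat) (m s t : seq nat) :
  0 < x -> x \in m -> all (fun c => c <= x) m ->
  sorted geq s -> sorted geq t -> all (fun d => d <= x) s -> all (fun d => d <= x) t ->
  perm_eq (ext_prods m s) (ext_prods m t) -> s = t.
Proof.
move=> x_gt0; elim: s m t => [|y s IH] m [|z t] // mx mle ss st.
- move=> _ /andP[zx _]; rewrite ext_prods_nil => /perm_mem/(_ (x * z)).
  by rewrite (mem_ext_prods_cons _ _ mx).
- move=> /andP[yx _] _; rewrite ext_prods_nil => /perm_mem/(_ (x * y)).
  by rewrite (mem_ext_prods_cons _ _ mx).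
move=> /= /andP[yx sx] /andP[zx tx] est.
have [my ly] := ext_prods_max mx mle ss yx.
have [mz lz] := ext_prods_max mx mle st zx.
have eyz : y = z.
  apply/eqP; rewrite eqn_leq -(leq_pmul2l x_gt0) -[z <= y](leq_pmul2l x_gt0).
  by rewrite lz -?(perm_mem est) // ly ?(perm_mem est).
subst z; congr (_ :: _); apply: (IH (rcons m y)).
- by rewrite mem_rcons inE mx orbT.
- by rewrite all_rcons yx mle.
- exact: path_sorted ss.
- exact: path_sorted st.
- by [].
- by [].
rewrite -(perm_cat2l [seq c * y | c <- m]) -(permPl (perm_ext_prods_cons m s y)).
by rewrite -(permPr (perm_ext_prods_cons m t y)).
Qed.

Theorem lemma2 (n : nat) (lam mu : seq nat) :
  0 < n -> is_partition n lam -> is_partition n mu ->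
  part1 lam = part1 mu -> pre2 lam = pre2 mu -> lam = mu.
Proof.
move=> n_gt0 /and3P[lam_sorted lam_pos /eqP lam_sum] /and3P[mu_sorted _ /eqP mu_sum].
case: lam => [|x s] in lam_sorted lam_pos lam_sum *; first by rewrite -lam_sum in n_gt0.
case: mu => [|y t] in mu_sorted mu_sum *; first by rewrite -mu_sum in n_gt0.
rewrite /part1 /= => eq_head eq_pre2; subst y.
have x_gt0 : 0 < x by case/andP: lam_pos.
have eq_prods : perm_eq (pairprods (x :: s)) (pairprods (x :: t)).
  by rewrite -(perm_sort geq) -pre2E eq_pre2 pre2E perm_sort.
rewrite !pairprods_cons in eq_prods.
congr (_ :: _); apply: (ext_prods_inj x_gt0 _ _ _ _ _ _ eq_prods).
- by rewrite inE.
- by rewrite /= leqnn.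
- exact: path_sorted lam_sorted.
- exact: path_sorted mu_sorted.
- exact: (order_path_min geq_trans lam_sorted).
- exact: (order_path_min geq_trans mu_sorted).
Qed.
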